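(* Consider a game in which Constructor and Blocker alternately claim unclaimed edges of $K_n$, and suppose that at some moment, with Constructor to move, there are five vertices $v_1,\dots,v_5$ that are isolated in Constructor's graph and such that no edge between two of them has been claimed by Blocker. Assume Constructor is allowed to claim edges among $v_1,\dots,v_5$ forming a triangle with a pendant leg (i.e. this subgraph is not forbidden to her). Then, whatever Blocker does, Constructor can within her next four moves build a triangle with a pendant leg on vertices among $v_1,\dots,v_5$.
   Context: A triangle with a pendant leg is a triangle together with one additional edge joining one of its vertices to a fourth vertex. Constructor's graph is the graph of edges claimed by Constructor. *)

From mathcomp Require Import all_boot.
Set Implicit Arguments. Unset Strict Implicit. Unset Printing Implicit Defensive.

(* Vertices of K_n are 'I_n; an edge is a 2-element subset of 'I_n;
   a graph (set of claimed edges) is a {set {set 'I_n}}. *)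

Definition is_edge n (e : {set 'I_n}) : bool := #|e| == 2.

Definition unclaimed n (C B : {set {set 'I_n}}) (e : {set 'I_n}) : bool :=
  [&& is_edge e, e \notin C & e \notin B].

Definition paw_on n (v : 'I_5 -> 'I_n) (C : {set {set 'I_n}}) : Prop :=
  exists a b c d : 'I_5,
    [/\ uniq [:: a; b; c; d],
        [set v a; v b] \in C, [set v b; v c] \in C,
        [set v c; v a] \in C & [set v c; v d] \in C].

Definition blocker_move n (C B B' : {set {set 'I_n}}) : Prop :=
  (exists e, unclaimed C B e /\ B' = e |: B) \/
  ((forall e, ~~ unclaimed C B e) /\ B' = B).

(* Constructor may only claim an unclaimed edge e whose addition keeps her
   graph admissible ([ok], e.g. free of the forbidden graph). *)
Fixpoint cwin n (ok : {set {set 'I_n}} -> bool) (v : 'I_5 -> 'I_n)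
    (k : nat) (C B : {set {set 'I_n}}) : Prop :=
  match k with
  | 0 => paw_on v C
  | k'.+1 =>
      paw_on v C \/
      exists e, [/\ unclaimed C B e, ok (e |: C) &
        (paw_on v (e |: C) \/
         forall B', blocker_move (e |: C) B B' -> cwin ok v k' (e |: C) B')]
  end.

From mathcomp Require Import all_boot zmodp.
Set Implicit Arguments. Unset Strict Implicit. Unset Printing Implicit Defensive.

(* Only the edges among v 0, ..., v 4 matter: Constructor's initial edges
   avoid these vertices, and a Blocker move elsewhere is as good as a pass.
   So the game is simulated by a finite game on K_5 in which Constructor must
   keep her graph inside some paw (triangle with a pendant leg) and Blocker may
   pass or claim any edge; that Constructor wins it within four moves from the
   empty position is checked by exhaustive search. *)

(* [vm_compute] is call by value, so [has] and [all] evaluate both operands of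
   [||] and [&&]; the search below is only feasible with short-circuiting. *)
Fixpoint has_lazy T (p : pred T) (s : seq T) : bool :=
  if s is x :: s' then if p x then true else has_lazy p s' else false.

Fixpoint all_lazy T (p : pred T) (s : seq T) : bool :=
  if s is x :: s' then if p x then all_lazy p s' else false else true.

Lemma has_lazyE T (p : pred T) s : has_lazy p s = has p s.
Proof. by elim: s => //= x s ->; case: (p x). Qed.

Lemma all_lazyE T (p : pred T) s : all_lazy p s = all p s.
Proof. by elim: s => //= x s ->; case: (p x). Qed.

Local Notation edge5 := ('I_5 * 'I_5)%type.

(* Unlike [enum] and [ord_enum], which are stuck on opaque proofs, [inZp]
   reduces under [vm_compute]. *)
Definition V5 : seq 'I_5 := [seq inZp i | i <- iota 0 5].

Lemma mem_V5 i : i \in V5.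
Proof.
apply/mapP; exists (val i); first by rewrite mem_iota ltn_ord.
by apply: val_inj; rewrite /= modn_small.
Qed.

Definition K5 : seq edge5 :=
  [seq e : edge5 <- [seq (a, b) | a <- V5, b <- V5] | e.1 < e.2].

Lemma mem_K5 (e : edge5) : (e \in K5) = (e.1 < e.2).
Proof. by case: e => a b; rewrite mem_filter allpairs_f ?mem_V5 ?andbT. Qed.

Definition mkedge (a b : 'I_5) : edge5 := if a < b then (a, b) else (b, a).

Definition paw5 (q : 'I_5 * 'I_5 * 'I_5 * 'I_5) : seq edge5 :=
  let: (a, b, c, d) := q in [:: mkedge a b; mkedge b c; mkedge c a; mkedge c d].

Definition paw_quads : seq ('I_5 * 'I_5 * 'I_5 * 'I_5) :=
  let pairs := [seq (a, b) | a <- V5, b <- V5] in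
  let triples := [seq (p, c) | p <- pairs, c <- V5] in
  [seq q <- [seq (t, d) | t <- triples, d <- V5]
     | let: (a, b, c, d) := q in uniq [:: a; b; c; d]].

Definition has_paw (X : seq edge5) : bool :=
  has_lazy (fun q => all_lazy (mem X) (paw5 q)) paw_quads.

Definition in_some_paw (X : seq edge5) : bool :=
  has_lazy (fun q => all_lazy (mem (paw5 q)) X) paw_quads.

(* [g Y] covers Blocker passing or claiming an edge outside the five vertices. *)
Definition blocker_replies (g : seq edge5 -> bool) (X Y : seq edge5) : bool :=
  if g Y then all_lazy (fun f => if f \in X then true else g (f :: Y)) K5 else false.

Fixpoint win5 (k : nat) (X Y : seq edge5) : bool :=
  if has_paw X then true else
  if k is k'.+1 then
    has_lazy (fun e =>
      if e \in X then false else if e \in Y then false else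
      if in_some_paw (e :: X) then
        if has_paw (e :: X) then true else blocker_replies (win5 k' (e :: X)) (e :: X) Y
      else false) K5
  else false.

Lemma win5_empty : win5 4 [::] [::].
Proof. by vm_compute. Qed.

Lemma win5S k X Y :
  win5 k.+1 X Y =
    has_paw X ||
    has (fun e => [&& e \notin X, e \notin Y, in_some_paw (e :: X) &
                  has_paw (e :: X) || blocker_replies (win5 k (e :: X)) (e :: X) Y]) K5.
Proof.
rewrite [LHS]/(win5 _ _ _) -/win5 has_lazyE; congr (_ || _); apply: eq_has => e.
by case: (e \in X); case: (e \in Y).
Qed.

Lemma blocker_repliesE g X Y :
  blocker_replies g X Y = g Y && all (fun f => (f \in X) || g (f :: Y)) K5.
Proof. by rewrite /blocker_replies all_lazyE. Qed.

Section Embedding.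

Variables (n : nat) (v : 'I_5 -> 'I_n).
Hypothesis v_inj : injective v.

Definition vedge (e : edge5) : {set 'I_n} := [set v e.1; v e.2].

Definition vedges (X : seq edge5) : {set {set 'I_n}} := [set:: map vedge X].

Lemma vedge_mkedge a b : vedge (mkedge a b) = [set v a; v b].
Proof. by rewrite /mkedge /vedge; case: ifP => //= _; rewrite setUC. Qed.

Lemma vedge_is_edge e : e \in K5 -> is_edge (vedge e).
Proof.
by case: e => a b; rewrite mem_K5 /is_edge cards2 (inj_eq v_inj) -val_eqE /= neq_ltn => ->.
Qed.

Lemma vedge_inj : {in K5 &, injective vedge}.
Proof.
move=> [a b] [c d]; rewrite !mem_K5 /vedge /= => ab cd eq_ab_cd.
have va : v a \in [set v c; v d] by rewrite -eq_ab_cd set21.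
have vb : v b \in [set v c; v d] by rewrite -eq_ab_cd set22.
move: ab cd; case/set2P: va => /v_inj->; case/set2P: vb => /v_inj->; rewrite ?ltnn //.
by move=> /ltn_trans dc /dc; rewrite ltnn.
Qed.

Lemma paw_on_vedges (C : {set {set 'I_n}}) X :
  has_paw X -> paw_on v (C :|: vedges X).
Proof.
rewrite /has_paw has_lazyE => /hasP[[[[a b] c] d]]; rewrite mem_filter => /andP[abcd _].
rewrite all_lazyE => /allP inX.
have inCX a' b' : mkedge a' b' \in paw5 (a, b, c, d) -> [set v a'; v b'] \in C :|: vedges X.
  by move=> /inX eX; rewrite -vedge_mkedge inE [_ \in vedges X]inE map_f ?orbT.
by exists a, b, c, d; split; rewrite // inCX // !inE eqxx ?orbT.
Qed.

Definition tracks (B : {set {set 'I_n}}) (Y : seq edge5) : Prop :=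
  {in K5, forall e, vedge e \in B -> e \in Y}.

Section Strategy.

Variables (ok : {set {set 'I_n}} -> bool) (C : {set {set 'I_n}}).
Hypothesis C_avoids_v : forall e i, e \in C -> v i \notin e.
Hypothesis ok_paw_subsets : forall a b c d : 'I_5, uniq [:: a; b; c; d] ->
  forall S : {set {set 'I_n}},
    S \subset [set [set v a; v b]; [set v b; v c]; [set v c; v a]; [set v c; v d]] ->
    ok (C :|: S).

Lemma ok_vedges X : in_some_paw X -> ok (C :|: vedges X).
Proof.
rewrite /in_some_paw has_lazyE => /hasP[[[[a b] c] d]]; rewrite mem_filter => /andP[abcd _].
rewrite all_lazyE => /allP in_paw.
apply: (ok_paw_subsets abcd); apply/subsetP => S; rewrite inE => /mapP[e /in_paw].
by rewrite !inE => /or4P[] /eqP-> ->; rewrite vedge_mkedge !eqxx ?orbT.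
Qed.

Lemma unclaimed_vedge X Y B e : {subset X <= K5} -> tracks B Y ->
  e \in K5 -> e \notin X -> e \notin Y -> unclaimed (C :|: vedges X) B (vedge e).
Proof.
move=> XK BY eK eX eY; rewrite /unclaimed vedge_is_edge //= in_setU negb_or -andbA.
apply/and3P; split.
- by apply/negP => /(C_avoids_v e.1); rewrite set21.
- rewrite inE; apply/mapP => -[f fX ef].
  by move: eX; rewrite (vedge_inj eK (XK _ fX) ef) fX.
- by apply: contra eY; apply: BY.
Qed.

Lemma blocker_move_tracked g X Y B B' : blocker_replies g X Y -> tracks B Y ->
  blocker_move (C :|: vedges X) B B' -> exists2 Y', tracks B' Y' & g Y'.
Proof.
rewrite blocker_repliesE => /andP[gY /allP replies] BY.
case=> [[e [e_free ->]] | [_ ->]]; last by exists Y.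
case: (boolP (has (fun f => vedge f == e) K5)) => [/hasP[f fK /eqP fe] | no_f].
- have fX : f \notin X.
    apply/negP => fX; move: e_free.
    by rewrite /unclaimed -fe in_setU [_ \in vedges X]inE map_f ?orbT ?andbF.
  exists (f :: Y); last by have := replies f fK; rewrite (negbTE fX).
  move=> r rK; rewrite in_setU1 inE => /orP[/eqP re | /(BY _ rK)->]; last by rewrite orbT.
  by rewrite (vedge_inj rK fK (etrans re (esym fe))) eqxx.
- exists Y => // r rK; rewrite in_setU1 => /orP[/eqP re | /(BY _ rK)//].
  by case/hasP: no_f; exists r; rewrite ?re.
Qed.

Lemma win5_cwin k X Y B : {subset X <= K5} -> tracks B Y -> win5 k X Y ->
  cwin ok v k (C :|: vedges X) B.
Proof.
elim: k X Y B => [|k IH] X Y B XK BY; first by rewrite /=; case: ifP => // /paw_on_vedges.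
rewrite win5S => /orP[/paw_on_vedges paw | /hasP]; first by left.
move=> [e eK /and4P[eX eY paw_eX paw_or_replies]].
right; exists (vedge e).
have -> : vedge e |: (C :|: vedges X) = C :|: vedges (e :: X).
  by rewrite /vedges /= set_cons setUCA.
have eXK : {subset e :: X <= K5} by move=> f; rewrite inE => /orP[/eqP-> | /XK].
split; [exact: unclaimed_vedge XK BY eK eX eY | exact: ok_vedges | ].
case/orP: paw_or_replies => [/paw_on_vedges | replies]; first by left.
right => B' /(blocker_move_tracked replies BY)[Y' BY' win_Y'].
exact: IH win_Y'.
Qed.

End Strategy.

End Embedding.

Theorem lemma2p3 (n : nat) (ok : {set {set 'I_n}} -> bool)
  (v : 'I_5 -> 'I_n) (C B : {set {set 'I_n}}) :
  injective v ->
  (forall e, e \in C -> is_edge e) ->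
  (forall e, e \in B -> is_edge e) ->
  [disjoint C & B] ->
  (forall e i, e \in C -> v i \notin e) ->
  (forall i j : 'I_5, [set v i; v j] \notin B) ->
  (forall a b c d : 'I_5, uniq [:: a; b; c; d] ->
     forall S : {set {set 'I_n}},
       S \subset [set [set v a; v b]; [set v b; v c];
                      [set v c; v a]; [set v c; v d]] ->
       ok (C :|: S)) ->
  cwin ok v 4 C B.
Proof.
move=> v_inj _ _ _ C_avoids_v B_avoids_v ok_paw.
have -> : C = C :|: vedges v [::] by rewrite /vedges set_nil setU0.
apply: (win5_cwin v_inj C_avoids_v ok_paw _ _ win5_empty) => // e _.
by rewrite /vedge (negbTE (B_avoids_v _ _)).
Qed.
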